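(* Let $\alpha_1,c_1>0$ and let $\{\lambda_n\}_{n\in\mathbb{N}^*}$ be a sequence of positive real numbers with $\lambda_n/(c_1n^{-\alpha_1})\to1$ as $n\to\infty$. Then \[ \sup_{N\in\mathbb{N}^*}\left\{2^{-m/N}\left[\prod_{n=1}^N\lambda_n\right]^{1/N}\right\}=c_1\left(\frac{\alpha_1}{\ln 2}\right)^{\alpha_1}m^{-\alpha_1}+o_{m\to\infty}(m^{-\alpha_1}). \]
   Context: $\mathbb{N}^*$ denotes the positive integers, $\ln$ the natural logarithm; $f=o_{m\to\infty}(g)$ means $f(m)/g(m)\to0$. *)

From Stdlib Require Import Reals.
From Coquelicot Require Import Coquelicot.
Open Scope R_scope.

Fixpoint prod_1toN (lam : nat -> R) (N : nat) : R :=
  match N with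
  | O => 1
  | S k => prod_1toN lam k * lam (S k)
  end.

Definition term (lam : nat -> R) (m N : nat) : R :=
  Rpower 2 (- INR m / INR N) * Rpower (prod_1toN lam N) (1 / INR N).

Definition supN (lam : nat -> R) (m : nat) : Rbar :=
  Sup_seq (fun k => term lam m (S k)).

From Stdlib Require Import Reals Lra Lia.
From Coquelicot Require Import Coquelicot.
Open Scope R_scope.

(* Write lam n = c n^(-a) q n with q n -> 1.  Cesaro's lemma applied to ln (q n), together
   with ln N! = N ln N - N + O(ln N), shows that the geometric mean of lam 1, ..., lam N is
   c e^a N^(-a) (1 + o(1)).  Hence, with x_m = m ln 2 / a,
     2^(-m/N) (lam 1 ... lam N)^(1/N) = c (a / ln 2)^a m^(-a) (1 + o(1)) profile a (x_m / N),
   where profile a t = (t e^(1-t))^a is at most 1, with equality at t = 1.  Choosing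
   N = floor x_m + 1 gives the lower bound.  For the upper bound the o(1) is uniform in large N,
   while for the finitely many small N one has profile a (x_m / N) = O(N / x_m) -> 0. *)

Lemma exp_le_compat x y : x <= y -> exp x <= exp y.
Proof.
  intros [Hlt | ->]; [left; exact (exp_increasing _ _ Hlt) | right; reflexivity].
Qed.

Lemma ln_le_sub_1 x : 0 < x -> ln x <= x - 1.
Proof.
  intros Hx. pose proof (exp_ineq1_le (ln x)) as H.
  rewrite exp_ln in H by exact Hx. lra.
Qed.

Lemma exp_opp_le_inv w : 0 < w -> exp (- w) <= / w.
Proof.
  intros Hw. rewrite exp_Ropp. apply Rinv_le_contravar; [exact Hw|].
  pose proof (exp_ineq1_le w). lra.
Qed.

Lemma ln2_pos : 0 < ln 2.
Proof. pose proof ln_lt_2. lra. Qed.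

Lemma ln_succ_bounds x : 0 < x -> / (x + 1) <= ln (x + 1) - ln x <= / x.
Proof.
  intros Hx. split.
  - pose proof (ln_le_sub_1 (x / (x + 1)) ltac:(apply Rdiv_lt_0_compat; lra)) as H.
    rewrite ln_div in H by lra.
    replace (x / (x + 1) - 1) with (- / (x + 1)) in H by (field; lra). lra.
  - pose proof (ln_le_sub_1 ((x + 1) / x) ltac:(apply Rdiv_lt_0_compat; lra)) as H.
    rewrite ln_div in H by lra.
    replace ((x + 1) / x - 1) with (/ x) in H by (field; lra). lra.
Qed.

Lemma ln_div_mult_Rpower x c y a : 0 < x -> 0 < c -> 0 < y ->
  ln (x / (c * Rpower y (- a))) = ln x - ln c + a * ln y.
Proof.
  intros Hx Hc Hy. unfold Rpower.
  rewrite ln_div, ln_mult, ln_exp by auto using exp_pos, Rmult_lt_0_compat.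
  ring.
Qed.

Lemma is_lim_seq_inv_INR : is_lim_seq (fun N => / INR N) 0.
Proof. exact (is_lim_seq_inv _ _ is_lim_seq_INR ltac:(discriminate)). Qed.

Lemma is_lim_seq_ln_div_INR : is_lim_seq (fun N => ln (INR N) / INR N) 0.
Proof. exact (filterlim_comp _ _ _ INR _ _ _ _ is_lim_seq_INR is_lim_div_ln_p). Qed.

Lemma is_lim_seq_INR_scal c : 0 < c -> is_lim_seq (fun m => INR m * c) p_infty.
Proof.
  intros Hc. pose proof (is_lim_seq_scal_r _ c _ is_lim_seq_INR) as H. simpl in H.
  destruct (Rle_dec 0 c) as [h|h]; [destruct (Rle_lt_or_eq_dec 0 c h)|]; [exact H | lra | lra].
Qed.

Lemma is_lim_seq_bounded_above (u : nat -> R) (l : R) :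
  is_lim_seq u l -> exists H, forall n, u n <= H.
Proof.
  intros Hu. apply is_lim_seq_spec in Hu.
  destruct (Hu (mkposreal 1 Rlt_0_1)) as [N0 HN0]; simpl in HN0.
  assert (Htail : forall n, (N0 <= n)%nat -> u n <= l + 1).
  { intros n Hn. specialize (HN0 n Hn). apply Rabs_lt_between' in HN0. lra. }
  clear HN0. revert Htail. generalize (l + 1).
  induction N0 as [|N0 IH]; intros B HB.
  - exists B. intros n. apply HB. lia.
  - apply (IH (Rmax B (u N0))). intros n Hn.
    destruct (Nat.eq_dec n N0) as [->|Hne]; [apply Rmax_r|].
    eapply Rle_trans; [apply HB; lia | apply Rmax_l].
Qed.

Lemma Sup_seq_bounds (u : nat -> R) (A B : R) :
  (forall k, u k <= B) -> (exists k, A <= u k) ->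
  is_finite (Sup_seq (fun k => u k)) /\ A <= real (Sup_seq (fun k => u k)) <= B.
Proof.
  intros Hub [k Hk].
  assert (Hlo : Rbar_le (u k) (Sup_seq (fun k => u k)))
    by (apply Sup_seq_minor_le with k; apply Rbar_le_refl).
  assert (Hhi : Rbar_le (Sup_seq (fun k => u k)) B).
  { apply Rbar_not_lt_le. intros [n Hn]%Sup_seq_minor_lt.
    specialize (Hub n). simpl in Hn. lra. }
  destruct (Sup_seq (fun k => u k)) as [s| |]; simpl in *; try contradiction.
  split; [reflexivity | lra].
Qed.

Lemma real_Sup_seq_scal_l (p : R) (u : nat -> R) : 0 <= p ->
  real (Sup_seq (fun k => p * u k)) = p * real (Sup_seq (fun k => u k)).
Proof.
  intros Hp.
  rewrite (Sup_seq_ext _ (fun k => Rbar_mult p (u k))) by reflexivity.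
  rewrite Sup_seq_scal_l by exact Hp.
  destruct (Sup_seq (fun k => u k)) as [s| |]; simpl; [reflexivity| |];
    destruct (Rle_dec 0 p) as [h|h]; try destruct (Rle_lt_or_eq_dec 0 p h);
    simpl; subst; try lra.
Qed.

Fixpoint sum_1toN (f : nat -> R) (N : nat) : R :=
  match N with
  | O => 0
  | S k => sum_1toN f k + f (S k)
  end.

Lemma prod_1toN_pos f N : (forall n, (1 <= n)%nat -> 0 < f n) -> 0 < prod_1toN f N.
Proof.
  intros Hf. induction N as [|N IH]; simpl; [lra|].
  apply Rmult_lt_0_compat; [exact IH | apply Hf; lia].
Qed.

Lemma ln_prod_1toN f N : (forall n, (1 <= n)%nat -> 0 < f n) ->
  ln (prod_1toN f N) = sum_1toN (fun n => ln (f n)) N.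
Proof.
  intros Hf. induction N as [|N IH]; simpl; [exact ln_1|].
  rewrite ln_mult, IH; [reflexivity | apply prod_1toN_pos, Hf | apply Hf; lia].
Qed.

Lemma sum_f_R0_sum_1toN f k : sum_f_R0 (fun j => f (S j)) k = sum_1toN f (S k).
Proof. induction k as [|k IH]; simpl; [lra | rewrite IH; reflexivity]. Qed.

Lemma is_lim_seq_mean_sum_1toN (u : nat -> R) (l : R) :
  is_lim_seq u l -> is_lim_seq (fun N => sum_1toN u N / INR N) l.
Proof.
  intros Hu. apply is_lim_seq_incr_1, is_lim_seq_Reals in Hu.
  pose proof (Cesaro_1 _ _ Hu) as Hmean. apply is_lim_seq_Reals in Hmean.
  refine (is_lim_seq_ext_loc _ _ _ _ Hmean).
  exists 1%nat. intros [|N] HN; [lia|]. simpl pred. rewrite sum_f_R0_sum_1toN. reflexivity.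
Qed.

Definition log_factorial (N : nat) : R := sum_1toN (fun n => ln (INR n)) N.

Lemma log_factorial_bounds N : (1 <= N)%nat ->
  INR N * ln (INR N) - INR N + 1 <= log_factorial N
  <= (INR N + 1) * ln (INR N) - INR N + 1.
Proof.
  intros HN. destruct N as [|N]; [lia|]. clear HN.
  induction N as [|N IH].
  - unfold log_factorial; simpl. rewrite ln_1. lra.
  - change (log_factorial (S (S N))) with (log_factorial (S N) + ln (INR (S (S N)))).
    rewrite (S_INR (S N)) in *. set (x := INR (S N)) in *.
    assert (Hx : 0 < x) by (apply lt_0_INR; lia).
    destruct (ln_succ_bounds x Hx) as [Hlo Hhi].
    pose proof (Rmult_le_compat_l x _ _ (Rlt_le _ _ Hx) Hhi) as Hx_hi.
    pose proof (Rmult_le_compat_l (x + 1) _ _ ltac:(lra) Hlo) as Hx_lo.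
    rewrite Rinv_r in Hx_hi, Hx_lo by lra.
    lra.
Qed.

Lemma is_lim_seq_log_factorial_mean :
  is_lim_seq (fun N => log_factorial N / INR N - ln (INR N) + 1) 0.
Proof.
  apply is_lim_seq_le_le_loc with (u := fun N => / INR N)
    (w := fun N => ln (INR N) / INR N + / INR N).
  - exists 1%nat. intros N HN.
    assert (HNpos : 0 < INR N) by (apply lt_0_INR; lia).
    destruct (log_factorial_bounds N HN) as [Hlo Hhi].
    replace (log_factorial N / INR N - ln (INR N) + 1)
      with ((log_factorial N - INR N * ln (INR N) + INR N) / INR N) by (field; lra).
    replace (ln (INR N) / INR N + / INR N) with ((ln (INR N) + 1) / INR N) by (field; lra).
    rewrite <- (Rmult_1_l (/ INR N)).
    split; apply Rmult_le_compat_r; try (left; apply Rinv_0_lt_compat); lra.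
  - exact is_lim_seq_inv_INR.
  - replace (Finite 0) with (Finite (0 + 0)) by (f_equal; ring).
    exact (is_lim_seq_plus' _ _ _ _ is_lim_seq_ln_div_INR is_lim_seq_inv_INR).
Qed.

Definition geometric_mean (lam : nat -> R) (N : nat) : R :=
  Rpower (prod_1toN lam N) (1 / INR N).

Definition normalized_geometric_mean (a c : R) (lam : nat -> R) (N : nat) : R :=
  geometric_mean lam N / (c * exp a * Rpower (INR N) (- a)).

Lemma normalized_geometric_mean_pos a c lam N : 0 < c -> 0 < normalized_geometric_mean a c lam N.
Proof.
  intros Hc. unfold normalized_geometric_mean, geometric_mean, Rpower.
  apply Rdiv_lt_0_compat; auto using exp_pos, Rmult_lt_0_compat.
Qed.

Section GeometricMean.

Variables (a c : R) (lam : nat -> R).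
Hypothesis Hc : 0 < c.
Hypothesis Hlam : forall n, (1 <= n)%nat -> 0 < lam n.

Lemma ln_normalized_geometric_mean N : (1 <= N)%nat ->
  ln (normalized_geometric_mean a c lam N)
  = sum_1toN (fun n => ln (lam n / (c * Rpower (INR n) (- a)))) N / INR N
    - a * (log_factorial N / INR N - ln (INR N) + 1).
Proof.
  intros HN. assert (HNpos : 0 < INR N) by (apply lt_0_INR; lia).
  assert (Hsum : forall K, sum_1toN (fun n => ln (lam n / (c * Rpower (INR n) (- a)))) K
    = sum_1toN (fun n => ln (lam n)) K - INR K * ln c + a * log_factorial K).
  { unfold log_factorial. induction K as [|K IH]; cbn [sum_1toN].
    - simpl. ring.
    - rewrite IH, ln_div_mult_Rpower, S_INR by first [exact Hc | apply Hlam; lia | apply lt_0_INR; lia].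
      ring. }
  unfold normalized_geometric_mean, geometric_mean, Rpower.
  rewrite ln_div, !ln_mult, !ln_exp, ln_prod_1toN, Hsum
    by auto using exp_pos, Rmult_lt_0_compat.
  field. lra.
Qed.

Theorem geometric_mean_asymptotic :
  is_lim_seq (fun n => lam n / (c * Rpower (INR n) (- a))) 1 ->
  is_lim_seq (normalized_geometric_mean a c lam) 1.
Proof.
  intros Hratio.
  assert (Hln_ratio : is_lim_seq (fun n => ln (lam n / (c * Rpower (INR n) (- a)))) 0).
  { rewrite <- ln_1. apply is_lim_seq_continuous; [|exact Hratio].
    apply continuity_pt_filterlim, continuous_ln, Rlt_0_1. }
  assert (Hln : is_lim_seq (fun N => ln (normalized_geometric_mean a c lam N)) 0).
  { refine (is_lim_seq_ext_loc _ _ _ _ _).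
    - exists 1%nat. intros N HN. symmetry. exact (ln_normalized_geometric_mean N HN).
    - replace (Finite 0) with (Finite (0 - a * 0)) by (f_equal; ring).
      apply is_lim_seq_minus'; [exact (is_lim_seq_mean_sum_1toN _ _ Hln_ratio)|].
      exact (is_lim_seq_scal_l _ a _ is_lim_seq_log_factorial_mean). }
  rewrite <- exp_0.
  apply is_lim_seq_ext with (u := fun N => exp (ln (normalized_geometric_mean a c lam N))).
  - intros N. exact (exp_ln _ (normalized_geometric_mean_pos a c lam N Hc)).
  - apply is_lim_seq_continuous; [|exact Hln].
    apply derivable_continuous_pt, derivable_pt_exp.
Qed.

End GeometricMean.

Definition profile (a t : R) : R := exp (a * (ln t + 1 - t)).

Lemma profile_le_1 a t : 0 <= a -> 0 < t -> profile a t <= 1.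
Proof.
  intros Ha Ht. rewrite <- exp_0. apply exp_le_compat.
  pose proof (ln_le_sub_1 t Ht). nra.
Qed.

Lemma profile_ge a t : 0 <= a -> 0 < t <= 1 -> 1 - a * (/ t - 1) <= profile a t.
Proof.
  intros Ha Ht. unfold profile.
  pose proof (exp_ineq1_le (a * (ln t + 1 - t))).
  pose proof (ln_le_sub_1 (/ t) ltac:(apply Rinv_0_lt_compat; lra)) as Hinv.
  rewrite ln_Rinv in Hinv by lra.
  nra.
Qed.

Lemma profile_le_inv a t : 0 < a -> 0 < t -> profile a t <= 2 * Rpower 2 a / (a * t).
Proof.
  intros Ha Ht. unfold profile.
  assert (Hln : ln t <= ln 2 + t / 2 - 1).
  { pose proof (ln_le_sub_1 (t / 2) ltac:(lra)) as H. rewrite ln_div in H by lra. lra. }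
  apply Rle_trans with (exp (a * ln 2) * exp (- (a * t / 2))).
  - rewrite <- exp_plus. apply exp_le_compat. nra.
  - replace (2 * Rpower 2 a / (a * t)) with (Rpower 2 a * / (a * t / 2)) by (field; lra).
    apply Rmult_le_compat_l; [left; apply exp_pos|].
    apply exp_opp_le_inv. nra.
Qed.

Lemma profile_rescaling a mu y : 0 < a -> 0 < mu -> 0 < y ->
  exp a * Rpower 2 (- mu / y) * Rpower y (- a)
  = Rpower (a / ln 2) a * Rpower mu (- a) * profile a (mu * (ln 2 / a) / y).
Proof.
  intros Ha Hmu Hy. pose proof ln2_pos.
  unfold profile, Rpower. rewrite <- !exp_plus. f_equal.
  rewrite !ln_div, ln_mult, ln_div
    by (try apply Rdiv_lt_0_compat; try apply Rmult_lt_0_compat; try apply Rdiv_lt_0_compat; lra).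
  field. lra.
Qed.

Section ProfileSup.

Variables (a l : R) (g x : nat -> R).
Hypothesis Ha : 0 < a.
Hypothesis Hg : forall N, 0 <= g N.
Hypothesis Hgl : is_lim_seq g l.
Hypothesis Hx : is_lim_seq x p_infty.

Lemma eventually_ge_x B : eventually (fun m => B <= x m).
Proof.
  apply (filter_imp (fun m => B < x m)); [intros m; lra|].
  exact (proj2 (is_lim_seq_spec _ _) Hx B).
Qed.

Lemma limit_nonneg : 0 <= l.
Proof. exact (is_lim_seq_le (fun _ => 0) g 0 l Hg (is_lim_seq_const 0) Hgl). Qed.

Lemma eventually_near_limit e : 0 < e ->
  exists N0, forall N, (N0 <= N)%nat -> l - e <= g N <= l + e.
Proof.
  intros He. destruct (proj2 (is_lim_seq_spec _ _) Hgl (mkposreal e He)) as [N0 HN0].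
  exists N0. intros N HN. specialize (HN0 N HN). apply Rabs_lt_between' in HN0. simpl in HN0. lra.
Qed.

Lemma profile_Sup_upper e : 0 < e ->
  eventually (fun m => forall k, g (S k) * profile a (x m / INR (S k)) <= l + e).
Proof.
  intros He. pose proof limit_nonneg as Hl.
  destruct (eventually_near_limit e He) as [N0 HN0].
  destruct (is_lim_seq_bounded_above g l Hgl) as [H HH].
  pose proof (Rle_trans _ _ _ (Hg 0%nat) (HH 0%nat)) as H0.
  set (C := 2 * Rpower 2 a / a).
  assert (HC : 0 < C) by (unfold C, Rpower; pose proof (exp_pos (a * ln 2)); apply Rdiv_lt_0_compat; lra).
  apply (filter_imp (fun m => Rmax 1 (H * C * INR N0 / e) <= x m)); [|apply eventually_ge_x].
  intros m Hxm k.
  pose proof (Rmax_l 1 (H * C * INR N0 / e)). pose proof (Rmax_r 1 (H * C * INR N0 / e)).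
  assert (HSk : 0 < INR (S k)) by (apply lt_0_INR; lia).
  assert (Ht : 0 < x m / INR (S k)) by (apply Rdiv_lt_0_compat; lra).
  pose proof (profile_le_1 a _ (Rlt_le _ _ Ha) Ht).
  assert (0 <= profile a (x m / INR (S k))) by (left; apply exp_pos).
  pose proof (Hg (S k)).
  destruct (Nat.le_gt_cases N0 (S k)) as [Hlarge | Hsmall].
  - specialize (HN0 _ Hlarge). nra.
  - pose proof (profile_le_inv a _ Ha Ht) as Hinv.
    replace (2 * Rpower 2 a / (a * (x m / INR (S k)))) with (C * INR (S k) / x m) in Hinv
      by (unfold C; field; lra).
    assert (HN0k : INR (S k) <= INR N0) by (apply le_INR; lia).
    assert (Hbound : H * (C * INR (S k) / x m) <= e).
    { replace (H * (C * INR (S k) / x m)) with (H * C * INR (S k) / x m) by (field; lra).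
      apply Rle_div_l; [lra|].
      apply Rle_trans with (H * C * INR N0); [apply Rmult_le_compat_l; nra|].
      replace (H * C * INR N0) with (H * C * INR N0 / e * e) by (field; lra).
      rewrite (Rmult_comm e). apply Rmult_le_compat_r; lra. }
    specialize (HH (S k)). nra.
Qed.

Lemma profile_Sup_lower e : 0 < e ->
  eventually (fun m => exists k, l - e <= g (S k) * profile a (x m / INR (S k))).
Proof.
  intros He. pose proof limit_nonneg as Hl.
  destruct (eventually_near_limit (e / 2) ltac:(lra)) as [N0 HN0].
  apply (filter_imp (fun m => Rmax (INR N0) (Rmax 1 (2 * l * a / e)) <= x m));
    [|apply eventually_ge_x].
  intros m Hxm.
  pose proof (Rmax_l (INR N0) (Rmax 1 (2 * l * a / e))).
  pose proof (Rmax_r (INR N0) (Rmax 1 (2 * l * a / e))).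
  pose proof (Rmax_l 1 (2 * l * a / e)). pose proof (Rmax_r 1 (2 * l * a / e)).
  destruct (nfloor_ex (x m) ltac:(lra)) as [n [Hn1 Hn2]].
  exists n. rewrite S_INR.
  assert (Hge : (N0 <= S n)%nat) by (apply INR_le; rewrite S_INR; lra).
  specialize (HN0 _ Hge).
  pose proof (profile_ge a (x m / (INR n + 1)) (Rlt_le _ _ Ha)
    ltac:(split; [apply Rdiv_lt_0_compat | apply Rle_div_l]; lra)) as Hprof.
  replace (/ (x m / (INR n + 1)) - 1) with ((INR n + 1 - x m) / x m) in Hprof by (field; lra).
  assert (Hdefect : a * ((INR n + 1 - x m) / x m) <= a / x m).
  { unfold Rdiv. apply Rmult_le_compat_l; [lra|].
    rewrite <- (Rmult_1_l (/ x m)) at 2.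
    apply Rmult_le_compat_r; [left; apply Rinv_0_lt_compat|]; lra. }
  assert (Hla : l * (a / x m) <= e / 2).
  { replace (l * (a / x m)) with (l * a / x m) by (field; lra).
    apply Rle_div_l; [lra|].
    apply Rle_trans with (e / 2 * (2 * l * a / e)); [right; field; lra|].
    apply Rmult_le_compat_l; lra. }
  pose proof (profile_le_1 a (x m / (INR n + 1)) (Rlt_le _ _ Ha)
    ltac:(apply Rdiv_lt_0_compat; lra)).
  set (p := profile a (x m / (INR n + 1))) in *.
  assert (0 <= p) by (left; apply exp_pos).
  assert (0 <= (g (S n) - (l - e / 2)) * p) by (apply Rmult_le_pos; lra).
  assert (0 <= l * (p - (1 - a / x m))) by (apply Rmult_le_pos; lra).
  nra.
Qed.

Theorem is_lim_seq_Sup_profile :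
  is_lim_seq (fun m => real (Sup_seq (fun k => g (S k) * profile a (x m / INR (S k))))) l.
Proof.
  apply is_lim_seq_spec. intros eps.
  assert (He : 0 < eps / 2) by (pose proof (cond_pos eps); lra).
  generalize (filter_and _ _ (profile_Sup_upper _ He) (profile_Sup_lower _ He)).
  apply filter_imp. intros m [Hup Hlow].
  destruct (Sup_seq_bounds _ _ _ Hup Hlow) as [_ Hb].
  apply Rabs_lt_between'. lra.
Qed.

End ProfileSup.

Lemma term_le a c lam m N : 0 <= a -> 0 < c -> (1 <= N)%nat ->
  term lam m N <= c * exp a * normalized_geometric_mean a c lam N.
Proof.
  intros Ha Hc HN. assert (HNpos : 1 <= INR N) by (apply (le_INR 1); exact HN).
  replace (c * exp a * normalized_geometric_mean a c lam N)
    with (Rpower (INR N) a * geometric_mean lam N)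
    by (unfold normalized_geometric_mean; rewrite Rpower_Ropp; field;
        split; [apply Rgt_not_eq, exp_pos | split; [apply Rgt_not_eq, exp_pos | lra]]).
  apply Rmult_le_compat_r; [left; apply exp_pos|].
  unfold Rpower. apply exp_le_compat.
  pose proof ln2_pos. pose proof (pos_INR m).
  assert (0 <= ln (INR N)) by (rewrite <- ln_1; apply ln_le; lra).
  assert (0 <= INR m / INR N * ln 2) by (apply Rmult_le_pos; [apply Rdiv_le_0_compat|]; lra).
  replace (- INR m / INR N * ln 2) with (- (INR m / INR N * ln 2)) by (field; lra).
  nra.
Qed.

Lemma term_eq a c lam m N : 0 < a -> 0 < c -> (1 <= m)%nat -> (1 <= N)%nat ->
  term lam m N = Rpower (INR m) (- a) *
    (c * Rpower (a / ln 2) a * normalized_geometric_mean a c lam N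
     * profile a (INR m * (ln 2 / a) / INR N)).
Proof.
  intros Ha Hc Hm HN.
  assert (Hmpos : 0 < INR m) by (apply lt_0_INR; lia).
  assert (HNpos : 0 < INR N) by (apply lt_0_INR; lia).
  change (term lam m N) with (Rpower 2 (- INR m / INR N) * geometric_mean lam N).
  transitivity (c * normalized_geometric_mean a c lam N
                * (exp a * Rpower 2 (- INR m / INR N) * Rpower (INR N) (- a))).
  - unfold normalized_geometric_mean. field.
    split; [apply Rgt_not_eq, exp_pos | split; [apply Rgt_not_eq, exp_pos | lra]].
  - rewrite profile_rescaling by assumption. ring.
Qed.

Section PowerLaw.

Variables (a c : R) (lam : nat -> R).
Hypothesis Ha : 0 < a.
Hypothesis Hc : 0 < c.
Hypothesis Hlam : forall n, (1 <= n)%nat -> 0 < lam n.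
Hypothesis Hratio : is_lim_seq (fun n => lam n / (c * Rpower (INR n) (- a))) 1.

Lemma supN_finite m : is_finite (supN lam m).
Proof.
  destruct (is_lim_seq_bounded_above _ 1 (geometric_mean_asymptotic a c lam Hc Hlam Hratio))
    as [H HH].
  assert (Hbound : forall k, term lam m (S k) <= c * exp a * H).
  { intros k. apply Rle_trans with (c * exp a * normalized_geometric_mean a c lam (S k)).
    - apply term_le; [lra | lra | lia].
    - apply Rmult_le_compat_l; [left; apply Rmult_lt_0_compat; [exact Hc | apply exp_pos] | apply HH]. }
  exact (proj1 (Sup_seq_bounds _ _ _ Hbound (ex_intro _ 0%nat (Rle_refl _)))).
Qed.

Lemma supN_rescaled m : (1 <= m)%nat ->
  real (supN lam m) = Rpower (INR m) (- a) *
    real (Sup_seq (fun k => c * Rpower (a / ln 2) a * normalized_geometric_mean a c lam (S k)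
                            * profile a (INR m * (ln 2 / a) / INR (S k)))).
Proof.
  intros Hm. unfold supN.
  rewrite (Sup_seq_ext (fun k => term lam m (S k))
    (fun k => Rpower (INR m) (- a) * (c * Rpower (a / ln 2) a * normalized_geometric_mean a c lam (S k)
                                       * profile a (INR m * (ln 2 / a) / INR (S k)))))
    by (intros k; rewrite (term_eq a c) by (assumption || lia); reflexivity).
  apply real_Sup_seq_scal_l. left. apply exp_pos.
Qed.

End PowerLaw.

Theorem lemma4 (a1 c1 : R) (lam : nat -> R) :
  0 < a1 -> 0 < c1 ->
  (forall n : nat, (1 <= n)%nat -> 0 < lam n) ->
  is_lim_seq (fun n => lam n / (c1 * Rpower (INR n) (- a1))) 1 ->
  (* the supremum is a finite real number ... *)
  (forall m : nat, is_finite (supN lam m)) /\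
  (* ... and sup - c1 (a1/ln 2)^a1 m^{-a1} = o(m^{-a1}) as m -> oo *)
  is_lim_seq
    (fun m => (real (supN lam m)
               - c1 * Rpower (a1 / ln 2) a1 * Rpower (INR m) (- a1))
              / Rpower (INR m) (- a1)) 0.
Proof.
  intros Ha Hc Hlam Hratio.
  split; [exact (supN_finite a1 c1 lam Ha Hc Hlam Hratio)|].
  set (K := c1 * Rpower (a1 / ln 2) a1).
  assert (HK : 0 < K) by (apply Rmult_lt_0_compat; [exact Hc | apply exp_pos]).
  assert (HKg : forall N, 0 <= K * normalized_geometric_mean a1 c1 lam N).
  { intros N. apply Rmult_le_pos; [lra|]. left. apply normalized_geometric_mean_pos, Hc. }
  assert (Hx : is_lim_seq (fun m => INR m * (ln 2 / a1)) p_infty).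
  { apply is_lim_seq_INR_scal. pose proof ln2_pos. apply Rdiv_lt_0_compat; lra. }
  pose proof (is_lim_seq_Sup_profile a1 (K * 1) _ _ Ha HKg
    (is_lim_seq_scal_l _ K _ (geometric_mean_asymptotic a1 c1 lam Hc Hlam Hratio)) Hx) as Hsup.
  replace (Finite 0) with (Finite (K * 1 - K)) by (f_equal; ring).
  refine (is_lim_seq_ext_loc _ _ _ _ (is_lim_seq_minus' _ _ _ _ Hsup (is_lim_seq_const K))).
  exists 1%nat. intros m Hm.
  rewrite (supN_rescaled a1 c1 lam Ha Hc m Hm). fold K.
  assert (Hp : 0 < Rpower (INR m) (- a1)) by apply exp_pos.
  field. lra.
Qed.
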